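(* For every finite set $A$ of lines in $\mathbb{R}^2$ there exists a point $q\in\mathbb{R}^2$ such that for every closed halfplane $h$ containing $q$ there is a set $A'\subseteq A$ with $|A'|\ge\sqrt{|A|/3}$ and $V(A')\subseteq h$.
   Context: For a finite set $A$ of lines in $\mathbb{R}^2$, $V(A)$ denotes the set of all intersection points of pairs of lines of $A$. *)

From Stdlib Require Import Reals List.
Import ListNotations.
Open Scope R_scope.

Definition point := (R * R)%type.

Definition is_line (L : point -> Prop) : Prop :=
  exists a b c : R, (a <> 0 \/ b <> 0) /\
    forall p : point, L p <-> a * fst p + b * snd p = c.

Definition is_closed_halfplane (h : point -> Prop) : Prop :=
  exists a b c : R, (a <> 0 \/ b <> 0) /\
    forall p : point, h p <-> a * fst p + b * snd p <= c.

Definition V (A : list (point -> Prop)) (p : point) : Prop :=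
  exists l1 l2, In l1 A /\ In l2 A /\ l1 <> l2 /\ l1 p /\ l2 p.

(* A halfplane is rich if it contains V(S) for some S included in A with 3 |S|^2 >= |A|.
   If three open halfplanes cover the plane, each line lies in the union of two of them, so two
   of them, O1 and O2, cover at least |A|/3 lines.  Order the lines crossing the boundary of O1
   componentwise by intercept and slope in coordinates adapted to O1: two incomparable lines meet
   inside O1, two comparable ones outside it, hence inside O2.  Mirsky's theorem yields a chain or
   an antichain of size at least sqrt(|A|/3), so O1 or O2 is rich.  Thus the complements of the
   non-rich open halfplanes meet three at a time, and Helly's theorem gives a common point q.
   Only finitely many halfplanes need to be considered: a non-rich closed halfplane through q can
   be traded, by a Farkas-type argument, for an open halfplane with a normal taken from a finite
   list determined by V(A), that contains q and no more points of V(A). *)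

From Stdlib Require Import Reals List Classical ClassicalEpsilon.
From Stdlib Require Import FunctionalExtensionality PropExtensionality Lia Lra Psatz.
Import ListNotations.
Open Scope nat_scope.

Definition holds {T : Type} (P : T -> Prop) (x : T) : bool :=
  if excluded_middle_informative (P x) then true else false.

Definition pfilter {T : Type} (P : T -> Prop) (l : list T) : list T := filter (holds P) l.

Lemma pfilter_In {T : Type} (P : T -> Prop) l x : In x (pfilter P l) <-> In x l /\ P x.
Proof.
  unfold pfilter, holds. rewrite filter_In.
  destruct (excluded_middle_informative (P x)); intuition discriminate.
Qed.

Lemma pfilter_NoDup {T : Type} (P : T -> Prop) l : NoDup l -> NoDup (pfilter P l).
Proof. apply NoDup_filter. Qed.

Lemma pfilter_incl {T : Type} (P : T -> Prop) l : incl (pfilter P l) l.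
Proof. intros x Hx. apply pfilter_In in Hx. tauto. Qed.

Lemma pfilter_length_compl {T : Type} (P : T -> Prop) l :
  length (pfilter P l) + length (pfilter (fun x => ~ P x) l) = length l.
Proof.
  unfold pfilter. rewrite <- (filter_length (holds P) l).
  f_equal. f_equal. apply filter_ext. intros x. unfold holds.
  destruct (excluded_middle_informative (P x)), (excluded_middle_informative (~ P x)); tauto.
Qed.

Section Mirsky.
Variables (T : Type) (lt : T -> T -> Prop) (D : T -> Prop).
Hypothesis lt_irrefl : forall x, D x -> ~ lt x x.
Hypothesis lt_trans : forall x y z, D x -> D y -> D z -> lt x y -> lt y z -> lt x z.

Definition chain (l : list T) := forall x y, In x l -> In y l -> x <> y -> lt x y \/ lt y x.
Definition antichain (l : list T) := forall x y, In x l -> In y l -> x <> y -> ~ lt x y.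
Definition minimal_in (P : list T) (x : T) := In x P /\ forall z, In z P -> ~ lt z x.

Lemma minimal_below P : (forall x, In x P -> D x) -> forall y, In y P ->
  exists x, minimal_in P x /\ (x = y \/ lt x y).
Proof.
  induction P as [|a P IH]; intros HD y Hy; [destruct Hy|].
  assert (HDP : forall x, In x P -> D x) by (intros; apply HD; simpl; auto).
  assert (Da : D a) by (apply HD; simpl; auto).
  assert (Hbelow_a : exists x, minimal_in (a :: P) x /\ (x = a \/ lt x a)).
  { destruct (classic (exists z, In z P /\ lt z a)) as [[z [Hz Hza]]|Hnone].
    - destruct (IH HDP z Hz) as [x [[Hx Hmin] Hxz]].
      assert (Hxa : lt x a) by (destruct Hxz as [<-|Hxz]; eauto).
      exists x. split; [split; [simpl; auto|]|auto].
      intros w [<-|Hw]; [|auto]. intro Hax. apply (lt_irrefl a Da). eauto.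
    - exists a. split; [split; [simpl; auto|]|auto].
      intros w [<-|Hw]; [auto|]. intro. apply Hnone. eauto. }
  destruct Hy as [<-|Hy]; [exact Hbelow_a|].
  destruct (IH HDP y Hy) as [x [[Hx Hmin] Hxy]].
  destruct (classic (lt a x)) as [Hax|Hax].
  - destruct Hbelow_a as [x' [Hmin' Hx'a]]. exists x'. split; [auto|right].
    assert (Hay : lt a y) by (destruct Hxy as [<-|Hxy]; eauto).
    destruct Hx'a as [->|Hx'a]; [auto|]. apply (lt_trans x' a y); auto. apply HD, Hmin'.
  - exists x. split; [split; [simpl; auto|]|auto]. intros w [<-|Hw]; auto.
Qed.

Lemma chain_least l : (forall x, In x l -> D x) -> chain l -> forall y, In y l ->
  exists y0, In y0 l /\ forall z, In z l -> z = y0 \/ lt y0 z.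
Proof.
  intros HD Hc y Hy. destruct (minimal_below l HD y Hy) as [x [[Hx Hmin] _]].
  exists x. split; [auto|]. intros z Hz. destruct (classic (z = x)) as [|Hzx]; [auto|].
  destruct (Hc x z Hx Hz (not_eq_sym Hzx)) as [|Hzx']; [auto|]. exfalso; eapply Hmin; eauto.
Qed.

Lemma chain_extend_minimal P S y : (forall x, In x P -> D x) -> chain S -> In y S ->
  (forall x, In x S -> In x P /\ ~ minimal_in P x) ->
  exists x, minimal_in P x /\ ~ In x S /\ chain (x :: S).
Proof.
  intros HD Hc Hy HS.
  assert (HDS : forall x, In x S -> D x) by (intros x Hx; apply HD, HS, Hx).
  destruct (chain_least S HDS Hc y Hy) as [y0 [Hy0 Hleast]].
  destruct (HS y0 Hy0) as [Hy0P Hnmin].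
  assert (Hz : exists z, In z P /\ lt z y0).
  { apply NNPP. intro Hn. apply Hnmin. split; [auto|]. intros z Hz Hlt. eauto. }
  destruct Hz as [z [Hz Hzy0]].
  destruct (minimal_below P HD z Hz) as [x [Hxmin Hxz]].
  assert (Hxy0 : lt x y0).
  { destruct Hxz as [<-|Hxz]; [auto|]. apply (lt_trans x z y0); auto. apply HD, Hxmin. }
  exists x. split; [auto|]. split; [intro Hx; apply (HS x Hx); auto|].
  assert (Hbelow : forall w, In w S -> lt x w).
  { intros w Hw. destruct (Hleast w Hw) as [->|Hw0]; [auto|].
    apply (lt_trans x y0 w); auto. apply HD, Hxmin. }
  intros a b [<-|Ha] [<-|Hb] Hab; [tauto|left; auto|right; auto|auto].
Qed.

Lemma nonminimal_shorter P : P <> [] -> (forall x, In x P -> D x) ->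
  length (pfilter (fun x => ~ minimal_in P x) P) < length P.
Proof.
  intros HP0 HD. destruct P as [|p0 P0]; [congruence|].
  destruct (minimal_below _ HD p0 (or_introl eq_refl)) as [m [Hm _]].
  assert (HmM : In m (pfilter (minimal_in (p0 :: P0)) (p0 :: P0)))
    by (apply pfilter_In; split; [apply Hm|auto]).
  pose proof (pfilter_length_compl (minimal_in (p0 :: P0)) (p0 :: P0)).
  destruct (pfilter (minimal_in (p0 :: P0)) (p0 :: P0)); [destruct HmM|simpl in *; lia].
Qed.

Definition chain_antichain_bound (P : list T) : Prop :=
  exists S1 S2, incl S1 P /\ NoDup S1 /\ chain S1 /\ incl S2 P /\ NoDup S2 /\ antichain S2 /\
    length P <= length S1 * length S2.

(* Peeling off the antichain of minimal elements lengthens a chain of the remaining ones. *)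
Lemma chain_antichain_bound_peel P : P <> [] -> NoDup P -> (forall x, In x P -> D x) ->
  chain_antichain_bound (pfilter (fun x => ~ minimal_in P x) P) -> chain_antichain_bound P.
Proof.
  intros HP0 HP HD [S1 [S2 [Hi1 [Hn1 [Hc1 [Hi2 [Hn2 [Ha2 Hl]]]]]]]].
  set (M := pfilter (minimal_in P) P) in *. set (P' := pfilter (fun x => ~ minimal_in P x) P) in *.
  assert (Hlen : length M + length P' = length P) by apply pfilter_length_compl.
  assert (HMa : antichain M).
  { intros x y Hx Hy _. apply pfilter_In in Hx, Hy. apply (proj2 (proj2 Hy)). tauto. }
  assert (HMP : incl M P) by apply pfilter_incl.
  assert (HP'P : incl P' P) by apply pfilter_incl.
  pose proof (nonminimal_shorter P HP0 HD).
  destruct P as [|p0 P0]; [congruence|].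
  destruct (minimal_below _ HD p0 (or_introl eq_refl)) as [m [Hm _]].
  destruct S1 as [|y S1'].
  { exists [m], M. repeat split; auto.
    - intros x [<-|[]]. apply Hm.
    - repeat constructor. intros [].
    - intros x y' [<-|[]] [<-|[]]; tauto.
    - apply pfilter_NoDup, HP.
    - simpl in Hl, Hlen |- *. lia. }
  destruct (chain_extend_minimal _ (y :: S1') y HD Hc1 (or_introl eq_refl)
              (fun x Hx => proj1 (pfilter_In _ _ x) (Hi1 x Hx))) as [x [Hxmin [HxS1 Hch]]].
  assert (Hinc : incl (x :: y :: S1') (p0 :: P0)).
  { intros a [<-|Ha]; [apply Hxmin|]. apply HP'P, Hi1, Ha. }
  destruct (Compare_dec.le_lt_dec (length M) (length S2)).
  - exists (x :: y :: S1'), S2.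
    repeat split; auto; [constructor; auto|intros a Ha; apply HP'P, Hi2, Ha|simpl in *; nia].
  - exists (x :: y :: S1'), M.
    repeat split; auto; [constructor; auto|apply pfilter_NoDup, HP|simpl in *; nia].
Qed.

Lemma mirsky P : NoDup P -> (forall x, In x P -> D x) -> chain_antichain_bound P.
Proof.
  remember (length P) as k eqn:Hk. revert P Hk.
  induction k as [k IH] using (well_founded_ind Wf_nat.lt_wf).
  intros P Hk HP HD. destruct P as [|p0 P0].
  { exists [], []. repeat split; try easy; try constructor; intros x y []. }
  apply chain_antichain_bound_peel; [discriminate|auto|auto|].
  pose proof (nonminimal_shorter (p0 :: P0) ltac:(discriminate) HD).
  apply (IH (length (pfilter (fun x => ~ minimal_in (p0 :: P0) x) (p0 :: P0))));
    [lia|auto|apply pfilter_NoDup, HP|].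
  intros x Hx. apply HD, (pfilter_incl _ _ x Hx).
Qed.

End Mirsky.

Open Scope R_scope.

Definition dot (u v : R * R) : R := fst u * fst v + snd u * snd v.
Definition vsub (x y : point) : point := (fst x - fst y, snd x - snd y).
Definition perp (w : R * R) : R * R := (- snd w, fst w).
Definition vneg (w : R * R) : R * R := (- fst w, - snd w).

(* A pair [(n, y)] describes the open halfplane [{p | n . (p - y) < 0}] and its complement,
   the closed halfplane [{p | n . (p - y) >= 0}]; both may be degenerate when [n = 0]. *)
Definition side := ((R * R) * point)%type.
Definition hform (c : side) (p : point) : R := dot (fst c) (vsub p (snd c)).
Definition open_side (c : side) (p : point) : Prop := hform c p < 0.
Definition closed_side (c : side) (p : point) : Prop := 0 <= hform c p.

Definition bary (l1 l2 l3 l4 : R) (x1 x2 x3 x4 : point) : point :=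
  ((l1 * fst x1 + l2 * fst x2 + l3 * fst x3 + l4 * fst x4) / (l1 + l2 + l3 + l4),
   (l1 * snd x1 + l2 * snd x2 + l3 * snd x3 + l4 * snd x4) / (l1 + l2 + l3 + l4)).

Lemma closed_side_bary l1 l2 l3 l4 x1 x2 x3 x4 c :
  0 <= l1 -> 0 <= l2 -> 0 <= l3 -> 0 <= l4 -> 0 < l1 + l2 + l3 + l4 ->
  (0 < l1 -> closed_side c x1) -> (0 < l2 -> closed_side c x2) ->
  (0 < l3 -> closed_side c x3) -> (0 < l4 -> closed_side c x4) ->
  closed_side c (bary l1 l2 l3 l4 x1 x2 x3 x4).
Proof.
  intros H1 H2 H3 H4 HL C1 C2 C3 C4.
  assert (Hterm : forall l x, 0 <= l -> (0 < l -> closed_side c x) -> 0 <= l * hform c x).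
  { intros l x Hl Hx. destruct Hl as [Hl|<-]; [apply Rmult_le_pos; [lra|apply Hx, Hl]|lra]. }
  assert (E : hform c (bary l1 l2 l3 l4 x1 x2 x3 x4) =
    (l1 * hform c x1 + l2 * hform c x2 + l3 * hform c x3 + l4 * hform c x4) / (l1 + l2 + l3 + l4)).
  { unfold hform, bary, dot, vsub; simpl. field. lra. }
  unfold closed_side. rewrite E. unfold Rdiv. apply Rmult_le_pos; [|left; apply Rinv_0_lt_compat, HL].
  pose proof (Hterm _ _ H1 C1). pose proof (Hterm _ _ H2 C2).
  pose proof (Hterm _ _ H3 C3). pose proof (Hterm _ _ H4 C4). lra.
Qed.

Lemma plane_dependence3 (u v w : R * R) : exists a b c, ~ (a = 0 /\ b = 0 /\ c = 0) /\
  a * fst u + b * fst v + c * fst w = 0 /\ a * snd u + b * snd v + c * snd w = 0.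
Proof.
  set (det := fun x y : R * R => fst x * snd y - snd x * fst y).
  destruct (classic (det v w = 0 /\ det w u = 0 /\ det u v = 0)) as [[_ [_ Huv]]|Hdet].
  - destruct (classic (u = (0, 0))) as [->|Hu].
    + exists 1, 0, 0. simpl. repeat split; lra.
    + (* [v] is parallel to [u], so [|u|^2 v = (u . v) u] *)
      exists (- dot u v), (dot u u), 0. unfold det, dot in *.
      destruct u as [u1 u2], v as [v1 v2]; simpl in *. repeat split.
      * intros [_ [Huu _]]. apply Hu.
        pose proof (Rle_0_sqr u1). pose proof (Rle_0_sqr u2). unfold Rsqr in *.
        f_equal; apply Rsqr_0_uniq; unfold Rsqr; lra.
      * transitivity (- u2 * (u1 * v2 - u2 * v1)); [ring|rewrite Huv; ring].
      * transitivity (u1 * (u1 * v2 - u2 * v1)); [ring|rewrite Huv; ring].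
  - (* Cramer: [det(v,w) u + det(w,u) v + det(u,v) w = 0] for any three plane vectors *)
    exists (det v w), (det w u), (det u v). unfold det. split; [tauto|split; ring].
Qed.

Lemma affine_dependence4 (x1 x2 x3 x4 : point) : exists m1 m2 m3 m4,
  ~ (m1 = 0 /\ m2 = 0 /\ m3 = 0 /\ m4 = 0) /\ m1 + m2 + m3 + m4 = 0 /\
  m1 * fst x1 + m2 * fst x2 + m3 * fst x3 + m4 * fst x4 = 0 /\
  m1 * snd x1 + m2 * snd x2 + m3 * snd x3 + m4 * snd x4 = 0.
Proof.
  destruct (plane_dependence3 (vsub x2 x1) (vsub x3 x1) (vsub x4 x1)) as [a [b [c [Hnz [E1 E2]]]]].
  unfold vsub in E1, E2; simpl in E1, E2.
  exists (- (a + b + c)), a, b, c. repeat split; [tauto|ring|lra|lra].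
Qed.

Lemma radon_partition (x1 x2 x3 x4 : point) : exists m1 m2 m3 m4 z,
  (forall c, (0 < m1 -> closed_side c x1) -> (0 < m2 -> closed_side c x2) ->
     (0 < m3 -> closed_side c x3) -> (0 < m4 -> closed_side c x4) -> closed_side c z) /\
  (forall c, (m1 <= 0 -> closed_side c x1) -> (m2 <= 0 -> closed_side c x2) ->
     (m3 <= 0 -> closed_side c x3) -> (m4 <= 0 -> closed_side c x4) -> closed_side c z).
Proof.
  destruct (affine_dependence4 x1 x2 x3 x4) as [m1 [m2 [m3 [m4 [Hnz [Hs [Hx Hy]]]]]]].
  assert (Hpos : forall m, 0 <= Rmax m 0 /\ 0 <= Rmax (- m) 0 /\ Rmax m 0 - Rmax (- m) 0 = m /\
                  (0 < Rmax m 0 -> 0 < m) /\ (0 < Rmax (- m) 0 -> m <= 0)).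
  { intros m. unfold Rmax. destruct (Rle_dec m 0), (Rle_dec (- m) 0); lra. }
  destruct (Hpos m1) as [P1 [Q1 [E1 [S1 T1]]]]. destruct (Hpos m2) as [P2 [Q2 [E2 [S2 T2]]]].
  destruct (Hpos m3) as [P3 [Q3 [E3 [S3 T3]]]]. destruct (Hpos m4) as [P4 [Q4 [E4 [S4 T4]]]].
  set (p1 := Rmax m1 0) in *. set (p2 := Rmax m2 0) in *.
  set (p3 := Rmax m3 0) in *. set (p4 := Rmax m4 0) in *.
  set (q1 := Rmax (- m1) 0) in *. set (q2 := Rmax (- m2) 0) in *.
  set (q3 := Rmax (- m3) 0) in *. set (q4 := Rmax (- m4) 0) in *.
  assert (HL : 0 < p1 + p2 + p3 + p4).
  { apply Rnot_le_lt. intro Hle. apply Hnz. lra. }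
  assert (Ebary : bary p1 p2 p3 p4 x1 x2 x3 x4 = bary q1 q2 q3 q4 x1 x2 x3 x4).
  { unfold bary. replace (q1 + q2 + q3 + q4) with (p1 + p2 + p3 + p4) by lra.
    rewrite <- E1, <- E2, <- E3, <- E4 in Hx, Hy. f_equal; f_equal; lra. }
  exists m1, m2, m3, m4, (bary p1 p2 p3 p4 x1 x2 x3 x4). split.
  - intros c C1 C2 C3 C4. apply closed_side_bary; auto.
  - intros c C1 C2 C3 C4. rewrite Ebary. apply closed_side_bary; auto. lra.
Qed.

Lemma radon_point (x1 x2 x3 x4 : point) : exists z, forall c,
  (closed_side c x2 /\ closed_side c x3 /\ closed_side c x4) \/
  (closed_side c x1 /\ closed_side c x3 /\ closed_side c x4) \/
  (closed_side c x1 /\ closed_side c x2 /\ closed_side c x4) \/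
  (closed_side c x1 /\ closed_side c x2 /\ closed_side c x3) -> closed_side c z.
Proof.
  destruct (radon_partition x1 x2 x3 x4) as [m1 [m2 [m3 [m4 [z [Zpos Znonpos]]]]]].
  exists z. intros c Hc.
  destruct Hc as [[C2 [C3 C4]]|[[C1 [C3 C4]]|[[C1 [C2 C4]]|[C1 [C2 C3]]]]].
  - destruct (Rle_or_lt m1 0); [apply Zpos|apply Znonpos]; intros; auto; lra.
  - destruct (Rle_or_lt m2 0); [apply Zpos|apply Znonpos]; intros; auto; lra.
  - destruct (Rle_or_lt m3 0); [apply Zpos|apply Znonpos]; intros; auto; lra.
  - destruct (Rle_or_lt m4 0); [apply Zpos|apply Znonpos]; intros; auto; lra.
Qed.

Definition triplewise_meet (F : list side) := forall c1 c2 c3, In c1 F -> In c2 F -> In c3 F ->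
  exists p, closed_side c1 p /\ closed_side c2 p /\ closed_side c3 p.

Lemma helly_bounded k (F : list side) : (length F <= k)%nat -> triplewise_meet F ->
  exists p, forall c, In c F -> closed_side c p.
Proof.
  revert F. induction k as [|k IH]; intros F HL HT.
  { destruct F; [|simpl in HL; lia]. exists (0, 0). intros c []. }
  destruct F as [|c1 [|c2 [|c3 [|c4 F]]]].
  - exists (0, 0). intros c [].
  - destruct (HT c1 c1 c1) as [p [H1 _]]; simpl; auto.
    exists p. intros c [<-|[]]; auto.
  - destruct (HT c1 c2 c2) as [p [H1 [H2 _]]]; simpl; auto.
    exists p. intros c [<-|[<-|[]]]; auto.
  - destruct (HT c1 c2 c3) as [p [H1 [H2 H3]]]; simpl; auto.
    exists p. intros c [<-|[<-|[<-|[]]]]; auto.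
  - assert (Hdrop : forall G, incl G (c1 :: c2 :: c3 :: c4 :: F) -> (length G <= k)%nat ->
                   exists x, forall c, In c G -> closed_side c x).
    { intros G HG HGl. apply IH; [auto|]. intros a b d Ha Hb Hd. apply HT; auto. }
    simpl in HL.
    destruct (Hdrop (c2 :: c3 :: c4 :: F)) as [x1 H1]; [intros ? ?; simpl in *; tauto|simpl; lia|].
    destruct (Hdrop (c1 :: c3 :: c4 :: F)) as [x2 H2]; [intros ? ?; simpl in *; tauto|simpl; lia|].
    destruct (Hdrop (c1 :: c2 :: c4 :: F)) as [x3 H3]; [intros ? ?; simpl in *; tauto|simpl; lia|].
    destruct (Hdrop (c1 :: c2 :: c3 :: F)) as [x4 H4]; [intros ? ?; simpl in *; tauto|simpl; lia|].
    (* each side of the list lies in three of the four sublists, so contains three of the x_i *)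
    destruct (radon_point x1 x2 x3 x4) as [z Hz].
    exists z. intros c Hc. apply Hz.
    simpl in Hc, H1, H2, H3, H4.
    destruct Hc as [<-|[<-|[<-|[<-|Hc]]]]; [left|right; left|right; right; left|right; right; right|left];
      repeat split; first [apply H1; tauto|apply H2; tauto|apply H3; tauto|apply H4; tauto].
Qed.

Lemma helly (F : list side) : triplewise_meet F -> exists p, forall c, In c F -> closed_side c p.
Proof. apply (helly_bounded (length F)), le_n. Qed.

Lemma pred_ext (L1 L2 : point -> Prop) : (forall p, L1 p <-> L2 p) -> L1 = L2.
Proof. intros H. apply functional_extensionality. intros p. apply propositional_extensionality, H. Qed.

Lemma Rmult_pos_eq0 (a x : R) : 0 < a -> a * x = 0 -> x = 0.
Proof. intros Ha Hax. destruct (Rmult_integral _ _ Hax); [lra|auto]. Qed.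

Lemma dot_self_pos (u : R * R) : u <> (0, 0) -> 0 < dot u u.
Proof.
  destruct u as [u1 u2]. unfold dot; simpl. intros Hu.
  destruct (classic (u1 = 0)) as [->|H1].
  - assert (u2 <> 0) by (intro; apply Hu; subst; auto).
    pose proof (Rsqr_pos_lt u2 H). unfold Rsqr in *. lra.
  - pose proof (Rsqr_pos_lt u1 H1). pose proof (Rle_0_sqr u2). unfold Rsqr in *. lra.
Qed.

Lemma line_coef_ex (L : point -> Prop) : exists t : (R * R) * R, is_line L ->
  0 < dot (fst t) (fst t) /\ forall p, L p <-> dot (fst t) p = snd t.
Proof.
  destruct (classic (is_line L)) as [[a [b [c [Hab HL]]]]|H]; [|exists ((0, 0), 0); tauto].
  exists ((a, b), c). intros _. split; [|exact HL].
  apply dot_self_pos. intros E. injection E. tauto.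
Qed.

Definition line_coef (L : point -> Prop) : (R * R) * R :=
  proj1_sig (constructive_indefinite_description _ (line_coef_ex L)).

Lemma line_coef_spec L : is_line L ->
  0 < dot (fst (line_coef L)) (fst (line_coef L)) /\
  forall p, L p <-> dot (fst (line_coef L)) p = snd (line_coef L).
Proof. unfold line_coef. destruct (constructive_indefinite_description _ _) as [t Ht]. exact Ht. Qed.

Definition cross (u v : R * R) : R := fst u * snd v - snd u * fst v.

Lemma line_through_two_points L p p' : is_line L -> L p -> L p' -> p <> p' ->
  forall x, L x <-> cross (vsub p' p) (vsub x p) = 0.
Proof.
  intros HL Hp Hp' Hpp' x. destruct (line_coef_spec L HL) as [Hl Hon].
  destruct (line_coef L) as [[l1 l2] c0]. simpl in *.
  rewrite Hon in Hp, Hp' |- *.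
  assert (Hd : 0 < dot (vsub p' p) (vsub p' p)).
  { apply dot_self_pos. destruct p as [a b], p' as [a' b']. unfold vsub; simpl. intros E.
    injection E as E1 E2. apply Hpp'. f_equal; lra. }
  destruct p as [a b], p' as [a' b'], x as [x1 x2]. unfold dot, cross, vsub in *; simpl in *.
  set (d1 := a' - a) in *. set (d2 := b' - b) in *. set (v1 := x1 - a). set (v2 := x2 - b).
  assert (Hld : l1 * d1 + l2 * d2 = 0) by (unfold d1, d2; lra).
  (* In the plane, [l . d = 0] and [l <> 0] force [l . v = 0 <-> cross d v = 0]. *)
  assert (I1 : l1 * (d1 * v2 - d2 * v1) = v2 * (l1 * d1 + l2 * d2) - d2 * (l1 * v1 + l2 * v2)) by ring.
  assert (I2 : l2 * (d1 * v2 - d2 * v1) = d1 * (l1 * v1 + l2 * v2) - v1 * (l1 * d1 + l2 * d2)) by ring.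
  assert (Elv : l1 * x1 + l2 * x2 - c0 = l1 * v1 + l2 * v2) by (unfold v1, v2; lra).
  rewrite Hld in I1, I2. split; intros H.
  - assert (Hlv : l1 * v1 + l2 * v2 = 0) by lra. rewrite Hlv in I1, I2.
    apply (Rmult_pos_eq0 (l1 * l1 + l2 * l2)); [auto|].
    transitivity (l1 * (l1 * (d1 * v2 - d2 * v1)) + l2 * (l2 * (d1 * v2 - d2 * v1))); [ring|].
    rewrite I1, I2. ring.
  - rewrite H in I1, I2.
    assert (Hlv : l1 * v1 + l2 * v2 = 0).
    { apply (Rmult_pos_eq0 (d1 * d1 + d2 * d2)); [auto|].
      transitivity (d1 * (d1 * (l1 * v1 + l2 * v2)) + d2 * (d2 * (l1 * v1 + l2 * v2))); [ring|].
      replace (d1 * (l1 * v1 + l2 * v2)) with 0 by lra.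
      replace (d2 * (l1 * v1 + l2 * v2)) with 0 by lra. ring. }
    lra.
Qed.

Lemma lines_meet_once L1 L2 p p' : is_line L1 -> is_line L2 -> L1 <> L2 ->
  L1 p -> L2 p -> L1 p' -> L2 p' -> p = p'.
Proof.
  intros H1 H2 Hne Hp1 Hp2 Hp'1 Hp'2. apply NNPP. intros Hpp'. apply Hne, pred_ext. intros x.
  rewrite (line_through_two_points L1 p p'), (line_through_two_points L2 p p'); tauto.
Qed.

Lemma fin_union {T : Type} (l : list T) (Q : T -> point -> Prop) :
  (forall x, In x l -> exists Lx, forall p, Q x p -> In p Lx) ->
  exists L, forall x p, In x l -> Q x p -> In p L.
Proof.
  induction l as [|a l IH]; intros H; [exists []; intros x p []|].
  destruct (H a (or_introl eq_refl)) as [La HLa].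
  destruct IH as [L HL]; [intros; apply H; simpl; auto|].
  exists (La ++ L). intros x p [<-|Hx] Hq; apply in_or_app; [left|right]; eauto.
Qed.

Lemma V_finite (A : list (point -> Prop)) : (forall L, In L A -> is_line L) ->
  exists Vl, forall p, V A p -> In p Vl.
Proof.
  intros HL.
  destruct (fin_union A (fun l1 p => exists l2, In l2 A /\ l1 <> l2 /\ l1 p /\ l2 p)) as [Vl HV].
  - intros l1 Hl1.
    destruct (fin_union A (fun l2 p => l1 <> l2 /\ l1 p /\ l2 p)) as [Vl1 HVl1].
    + intros l2 Hl2.
      destruct (classic (exists p0, l1 <> l2 /\ l1 p0 /\ l2 p0)) as [[p0 [Hne [H1 H2]]]|Hnone].
      * exists [p0]. intros p [_ [Hp1 Hp2]]. left. apply (lines_meet_once l1 l2); auto.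
      * exists []. intros p Hp. apply Hnone. eauto.
    + exists Vl1. intros p [l2 [Hl2 Hp]]. eauto.
  - exists Vl. intros p [l1 [l2 [Hl1 [Hl2 Hp]]]]. eauto.
Qed.

Lemma line_coordinate L : is_line L -> exists lam : point -> R, forall c : side,
  exists E K, forall x, L x -> (open_side c x <-> E + K * lam x < 0).
Proof.
  intros HL. destruct (line_coef_spec L HL) as [Hl Hon].
  destruct (line_coef L) as [[a b] c0]. simpl in *.
  exists (fun x => - b * fst x + a * snd x). intros [[n1 n2] [y1 y2]].
  set (D := a * a + b * b).
  assert (HD : 0 < D) by (unfold D; unfold dot in Hl; simpl in Hl; lra).
  exists (n1 * a * c0 + n2 * b * c0 - D * (n1 * y1 + n2 * y2)), (- n1 * b + n2 * a).
  intros x Hx. apply Hon in Hx.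
  assert (E : D * hform ((n1, n2), (y1, y2)) x =
    n1 * a * c0 + n2 * b * c0 - D * (n1 * y1 + n2 * y2) + (- n1 * b + n2 * a) * (- b * fst x + a * snd x)).
  { rewrite <- Hx. unfold D, hform, dot, vsub; simpl. ring. }
  unfold open_side. rewrite <- E. set (h := hform _ x). clearbody D h. split; intros H; nra.
Qed.

Lemma affine_nonneg_between (E K la lb lm : R) : 0 <= E + K * la -> 0 <= E + K * lb ->
  la <= lm <= lb \/ lb <= lm <= la -> 0 <= E + K * lm.
Proof.
  intros Ha Hb Hm.
  assert (Id : (E + K * lm) * (lb - la) = (lb - lm) * (E + K * la) + (lm - la) * (E + K * lb)) by ring.
  destruct (Req_dec la lb) as [<-|Hne]; [replace lm with la by lra; auto|].
  destruct Hm as [[H1 H2]|[H1 H2]]; nra.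
Qed.

Lemma line_covered_by_two L c1 c2 c3 : is_line L ->
  (forall p, L p -> open_side c1 p \/ open_side c2 p \/ open_side c3 p) ->
  (forall p, L p -> open_side c1 p \/ open_side c2 p) \/
  (forall p, L p -> open_side c1 p \/ open_side c3 p) \/
  (forall p, L p -> open_side c2 p \/ open_side c3 p).
Proof.
  intros HL Hcov. apply NNPP. intros Hn.
  assert (Hmiss : forall ci cj, ~ (forall p, L p -> open_side ci p \/ open_side cj p) ->
                    exists p, L p /\ ~ open_side ci p /\ ~ open_side cj p).
  { intros ci cj H. apply NNPP. intros Hno. apply H. intros p Hp.
    apply NNPP. intros Hp'. apply Hno. exists p. tauto. }
  destruct (Hmiss c1 c2 ltac:(tauto)) as [p [Hp [H1p H2p]]].
  destruct (Hmiss c1 c3 ltac:(tauto)) as [q [Hq [H1q H3q]]].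
  destruct (Hmiss c2 c3 ltac:(tauto)) as [r [Hr [H2r H3r]]].
  assert (H3p : open_side c3 p) by (destruct (Hcov p Hp) as [|[|]]; tauto).
  assert (H2q : open_side c2 q) by (destruct (Hcov q Hq) as [|[|]]; tauto).
  assert (H1r : open_side c1 r) by (destruct (Hcov r Hr) as [|[|]]; tauto).
  destruct (line_coordinate L HL) as [lam Hlam].
  destruct (Hlam c1) as [E1 [K1 F1]]. destruct (Hlam c2) as [E2 [K2 F2]].
  destruct (Hlam c3) as [E3 [K3 F3]].
  rewrite (F1 p Hp) in H1p. rewrite (F2 p Hp) in H2p. rewrite (F3 p Hp) in H3p.
  rewrite (F1 q Hq) in H1q. rewrite (F2 q Hq) in H2q. rewrite (F3 q Hq) in H3q.
  rewrite (F1 r Hr) in H1r. rewrite (F2 r Hr) in H2r. rewrite (F3 r Hr) in H3r.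
  (* whichever of p, q, r lies between the other two escapes all three halfplanes *)
  destruct (Rle_or_lt (lam p) (lam q)), (Rle_or_lt (lam q) (lam r)), (Rle_or_lt (lam p) (lam r)).
  all: first
    [ assert (0 <= E1 + K1 * lam r) by (apply (affine_nonneg_between E1 K1 (lam p) (lam q)); lra); lra
    | assert (0 <= E2 + K2 * lam q) by (apply (affine_nonneg_between E2 K2 (lam p) (lam r)); lra); lra
    | assert (0 <= E3 + K3 * lam p) by (apply (affine_nonneg_between E3 K3 (lam q) (lam r)); lra); lra ].
Qed.

Lemma V_app_covered (S T : list (point -> Prop)) (O : point -> Prop) :
  (forall p, V S p -> O p) -> (forall L p, In L T -> L p -> O p) -> forall p, V (S ++ T) p -> O p.
Proof.
  intros HS HT p [l1 [l2 [H1 [H2 [Hne [Hp1 Hp2]]]]]].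
  apply in_app_or in H1, H2.
  destruct H1 as [H1|H1]; [|eauto]. destruct H2 as [H2|H2]; [|eauto].
  apply HS. exists l1, l2. auto.
Qed.

Lemma NoDup_app_separated {T : Type} (P : T -> Prop) (S1 S2 : list T) : NoDup S1 -> NoDup S2 ->
  (forall x, In x S1 -> P x) -> (forall x, In x S2 -> ~ P x) -> NoDup (S1 ++ S2).
Proof. intros H1 H2 HP1 HP2. apply NoDup_app; auto. intros x Hx1 Hx2. apply (HP2 x); auto. Qed.

(* Coordinates adapted to the side [(n, y)]: [s_coord] is negative exactly on its open side and
   [t_coord] runs along its boundary.  A line [L] not parallel to the boundary is the graph
   [t + slope L * s = offset L]; such lines are ordered componentwise by [(offset, slope)]. *)
Section SideCoordinates.
Variables (n : R * R) (y : point).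
Hypothesis n_pos : 0 < dot n n.

Definition s_coord (p : point) : R := dot n (vsub p y).
Definition t_coord (p : point) : R := dot (perp n) p.
Definition lcoef_t (L : point -> Prop) : R := dot (perp n) (fst (line_coef L)).
Definition lcoef_s (L : point -> Prop) : R := dot n (fst (line_coef L)).
Definition lcoef_c (L : point -> Prop) : R :=
  dot n n * snd (line_coef L) - lcoef_s L * dot n y.
Definition offset (L : point -> Prop) : R := lcoef_c L / lcoef_t L.
Definition slope (L : point -> Prop) : R := lcoef_s L / lcoef_t L.

Definition nonparallel (L : point -> Prop) : Prop := is_line L /\ lcoef_t L <> 0.

Lemma line_in_side_coords L p : is_line L ->
  (L p <-> lcoef_t L * t_coord p + lcoef_s L * s_coord p = lcoef_c L).
Proof.
  intros HL. destruct (line_coef_spec L HL) as [_ Hon]. rewrite Hon.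
  unfold lcoef_c, lcoef_t, lcoef_s, t_coord, s_coord.
  destruct (line_coef L) as [[l1 l2] c0], n as [n1 n2], y as [y1 y2], p as [p1 p2].
  unfold dot, perp, vsub in *; simpl in *.
  assert (E : (- n2 * l1 + n1 * l2) * (- n2 * p1 + n1 * p2)
    + (n1 * l1 + n2 * l2) * (n1 * (p1 - y1) + n2 * (p2 - y2))
    - ((n1 * n1 + n2 * n2) * c0 - (n1 * l1 + n2 * l2) * (n1 * y1 + n2 * y2))
    = (n1 * n1 + n2 * n2) * (l1 * p1 + l2 * p2 - c0)) by ring.
  split; intros H.
  - rewrite H in E. lra.
  - assert (Hz : (n1 * n1 + n2 * n2) * (l1 * p1 + l2 * p2 - c0) = 0) by lra.
    apply Rmult_pos_eq0 in Hz; [lra|auto].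
Qed.

Lemma nonparallel_graph L p : nonparallel L -> (L p <-> t_coord p + slope L * s_coord p = offset L).
Proof.
  intros [HL Ht]. rewrite (line_in_side_coords L p HL). unfold slope, offset. split; intros H.
  - rewrite <- H. field. auto.
  - replace (lcoef_c L) with (lcoef_t L * (lcoef_c L / lcoef_t L)) by (field; auto).
    rewrite <- H. field. auto.
Qed.

Lemma parallel_level L p : is_line L -> lcoef_t L = 0 ->
  (L p <-> s_coord p = lcoef_c L / lcoef_s L).
Proof.
  intros HL Ht. destruct (line_coef_spec L HL) as [Hl _].
  assert (Hs : lcoef_s L <> 0).
  { intros Hs. unfold lcoef_t, lcoef_s in *.
    destruct (line_coef L) as [[l1 l2] c0], n as [n1 n2]. unfold dot, perp in *; simpl in *.
    assert (E : (n1 * n1 + n2 * n2) * (l1 * l1 + l2 * l2) =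
      (- n2 * l1 + n1 * l2) * (- n2 * l1 + n1 * l2) + (n1 * l1 + n2 * l2) * (n1 * l1 + n2 * l2)) by ring.
    rewrite Ht, Hs in E. nra. }
  rewrite (line_in_side_coords L p HL), Ht. split; intros H.
  - rewrite <- H. field. auto.
  - rewrite H. field. auto.
Qed.

Lemma nonparallel_ext L L' : nonparallel L -> nonparallel L' ->
  offset L = offset L' -> slope L = slope L' -> L = L'.
Proof.
  intros H H' Ho Hs. apply pred_ext. intros p.
  rewrite (nonparallel_graph L p H), (nonparallel_graph L' p H'), Ho, Hs. tauto.
Qed.

Lemma parallel_disjoint L L' p : is_line L -> is_line L' -> lcoef_t L = 0 -> lcoef_t L' = 0 ->
  L <> L' -> L p -> L' p -> False.
Proof.
  intros HL HL' Ht Ht' Hne Hp Hp'. apply Hne, pred_ext. intros x.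
  rewrite (parallel_level L x HL Ht), (parallel_level L' x HL' Ht').
  rewrite (parallel_level L p HL Ht) in Hp. rewrite (parallel_level L' p HL' Ht') in Hp'.
  rewrite <- Hp, <- Hp'. tauto.
Qed.

Definition below (L L' : point -> Prop) : Prop :=
  L <> L' /\ offset L <= offset L' /\ slope L <= slope L'.

Lemma below_trans L1 L2 L3 : nonparallel L1 -> nonparallel L2 -> nonparallel L3 ->
  below L1 L2 -> below L2 L3 -> below L1 L3.
Proof.
  intros H1 H2 H3 [Hne12 [Ho12 Hs12]] [Hne23 [Ho23 Hs23]]. split; [|split; lra].
  intros ->. apply Hne12, nonparallel_ext; auto; lra.
Qed.

Lemma meet_coords L1 L2 p : nonparallel L1 -> nonparallel L2 -> L1 p -> L2 p ->
  s_coord p * (slope L1 - slope L2) = offset L1 - offset L2.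
Proof.
  intros H1 H2 Hp1 Hp2. apply (nonparallel_graph L1 p H1) in Hp1.
  apply (nonparallel_graph L2 p H2) in Hp2. lra.
Qed.

Lemma meet_slopes_differ L1 L2 p : nonparallel L1 -> nonparallel L2 -> L1 <> L2 ->
  L1 p -> L2 p -> slope L1 <> slope L2.
Proof.
  intros H1 H2 Hne Hp1 Hp2 Eu. pose proof (meet_coords L1 L2 p H1 H2 Hp1 Hp2) as Hs.
  rewrite Eu in Hs. apply Hne, nonparallel_ext; auto. lra.
Qed.

Lemma antichain_meets_open S : (forall L, In L S -> nonparallel L) -> antichain _ below S ->
  forall p, V S p -> s_coord p < 0.
Proof.
  intros HS Ha p [l1 [l2 [H1 [H2 [Hne [Hp1 Hp2]]]]]].
  pose proof (Ha l1 l2 H1 H2 Hne) as N12. pose proof (Ha l2 l1 H2 H1 (not_eq_sym Hne)) as N21.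
  pose proof (meet_coords l1 l2 p (HS l1 H1) (HS l2 H2) Hp1 Hp2) as Hs.
  pose proof (meet_slopes_differ l1 l2 p (HS l1 H1) (HS l2 H2) Hne Hp1 Hp2) as Hu.
  unfold below in N12, N21.
  destruct (Rlt_or_le (slope l1) (slope l2)).
  - assert (offset l2 < offset l1) by (apply Rnot_le_lt; intro; apply N12; split; [auto|lra]). nra.
  - assert (offset l1 < offset l2) by (apply Rnot_le_lt; intro; apply N21; split; [auto|lra]).
    assert (slope l2 < slope l1) by lra. nra.
Qed.

Lemma chain_meets_closed S : (forall L, In L S -> nonparallel L) -> chain _ below S ->
  forall p, V S p -> 0 <= s_coord p.
Proof.
  intros HS Hc p [l1 [l2 [H1 [H2 [Hne [Hp1 Hp2]]]]]].
  pose proof (meet_coords l1 l2 p (HS l1 H1) (HS l2 H2) Hp1 Hp2) as Hs.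
  pose proof (meet_slopes_differ l1 l2 p (HS l1 H1) (HS l2 H2) Hne Hp1 Hp2) as Hu.
  destruct (Hc l1 l2 H1 H2 Hne) as [[_ [Ho Hsl]]|[_ [Ho Hsl]]];
    assert (0 < (slope l1 - slope l2) * (slope l1 - slope l2)) by (apply Rsqr_pos_lt; lra); nra.
Qed.

Lemma parallel_line_side L : is_line L -> lcoef_t L = 0 ->
  (forall p, L p -> s_coord p < 0) \/ (forall p, L p -> 0 <= s_coord p).
Proof.
  intros HL Ht. destruct (Rlt_or_le (lcoef_c L / lcoef_s L) 0); [left|right];
    intros p Hp; rewrite (parallel_level L p HL Ht) in Hp; lra.
Qed.

Lemma parallel_family_no_vertex (C : list (point -> Prop)) :
  (forall L, In L C -> is_line L /\ lcoef_t L = 0) -> forall p, ~ V C p.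
Proof.
  intros HC p [l1 [l2 [H1 [H2 [Hne [Hp1 Hp2]]]]]].
  destruct (HC l1 H1), (HC l2 H2). apply (parallel_disjoint l1 l2 p); auto.
Qed.

Lemma parallel_partition (O : point -> Prop) (Par : list (point -> Prop)) : NoDup Par ->
  (forall L, In L Par -> is_line L /\ lcoef_t L = 0) ->
  (forall L p, In L Par -> L p -> s_coord p < 0 \/ O p) ->
  exists Pin Pout, incl Pin Par /\ incl Pout Par /\ NoDup Pin /\ NoDup Pout /\
    (length Pin + length Pout = length Par)%nat /\
    (forall L p, In L Pin -> L p -> s_coord p < 0) /\ (forall L p, In L Pout -> L p -> O p).
Proof.
  intros HND HPar Hcov. set (inside := fun L : point -> Prop => forall p, L p -> s_coord p < 0).
  exists (pfilter inside Par), (pfilter (fun L => ~ inside L) Par).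
  repeat split; try apply pfilter_incl; try apply pfilter_NoDup, HND; try apply pfilter_length_compl.
  - intros L p H. apply pfilter_In in H. apply H.
  - intros L p H Hp. apply pfilter_In in H. destruct H as [HL Hout]. destruct (HPar L HL) as [HLl Ht].
    destruct (parallel_line_side L HLl Ht) as [Hin|Hnn]; [contradiction|].
    destruct (Hcov L p HL Hp) as [Hs|]; [specialize (Hnn p Hp); lra|auto].
Qed.

(* The heart of the argument: the nonparallel lines split into a chain and an antichain for
   [below]; intersections inside an antichain lie on the open side, intersections inside a chain
   do not, and lines parallel to the boundary join whichever part suits them. *)
Lemma side_split (O : point -> Prop) (C : list (point -> Prop)) :
  (forall L, In L C -> is_line L) -> NoDup C ->
  (forall L p, In L C -> L p -> s_coord p < 0 \/ O p) ->
  exists S, incl S C /\ NoDup S /\ (length C <= length S * length S)%nat /\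
    ((forall p, V S p -> s_coord p < 0) \/ (forall p, V S p -> O p)).
Proof.
  intros HL HC Hcov.
  set (NP := pfilter nonparallel C). set (Par := pfilter (fun L => ~ nonparallel L) C).
  assert (HNPC : incl NP C) by apply pfilter_incl.
  assert (HParC : incl Par C) by apply pfilter_incl.
  assert (HNP : forall L, In L NP -> nonparallel L) by (intros L H; apply pfilter_In in H; tauto).
  assert (HPar : forall L, In L Par -> is_line L /\ lcoef_t L = 0).
  { intros L H. apply pfilter_In in H. split; [apply HL; tauto|].
    apply NNPP. intros Ht. apply (proj2 H). split; [apply HL|]; tauto. }
  assert (HParNP : forall L, In L Par -> ~ nonparallel L) by (intros L H [_ Ht]; apply Ht, HPar, H).
  destruct (parallel_partition O Par (pfilter_NoDup _ _ HC) HPar (fun L p H => Hcov L p (HParC L H)))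
    as [Pin [Pout [HinP [HoutP [HNin [HNout [Elen [HPin HPout]]]]]]]].
  pose proof (pfilter_length_compl nonparallel C) as E. fold NP Par in E.
  destruct NP as [|L0 NP0] eqn:ENP.
  { exists C. repeat split; [apply incl_refl|auto|nia|left].
    intros p Hp. exfalso. refine (parallel_family_no_vertex C _ p Hp).
    intros L H. apply HPar, pfilter_In. split; [auto|]. intros HnpL.
    assert (Hin : In L NP) by (apply pfilter_In; auto). rewrite ENP in Hin. destruct Hin. }
  rewrite <- ENP in *.
  destruct (mirsky _ below nonparallel (fun L _ Hb => proj1 Hb eq_refl)
    (fun L1 L2 L3 => below_trans L1 L2 L3) NP (pfilter_NoDup _ _ HC) HNP)
    as [S1 [S2 [Hi1 [Hn1 [Hc1 [Hi2 [Hn2 [Ha2 Hl]]]]]]]].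
  assert (Hlen : (1 <= length S1 /\ 1 <= length S2)%nat) by (rewrite ENP in Hl; simpl in Hl; nia).
  assert (HS1 : forall L, In L S1 -> nonparallel L) by auto.
  assert (HS2 : forall L, In L S2 -> nonparallel L) by auto.
  destruct (Compare_dec.le_lt_dec (length S1 + length Pout) (length S2 + length Pin)).
  - exists (S2 ++ Pin). split; [|split; [|split]].
    + intros L H. apply in_app_or in H. destruct H; [apply HNPC, Hi2|apply HParC, HinP]; auto.
    + apply (NoDup_app_separated nonparallel); auto.
    + rewrite length_app. nia.
    + left. apply V_app_covered; [apply antichain_meets_open; auto|exact HPin].
  - exists (S1 ++ Pout). split; [|split; [|split]].
    + intros L H. apply in_app_or in H. destruct H; [apply HNPC, Hi1|apply HParC, HoutP]; auto.
    + apply (NoDup_app_separated nonparallel); auto.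
    + rewrite length_app. nia.
    + right. apply V_app_covered; [|exact HPout].
      intros p Hp. pose proof (chain_meets_closed S1 HS1 Hc1 p Hp).
      destruct Hp as [l1 [_ [H1 [_ [_ [Hp1 _]]]]]].
      destruct (Hcov l1 p (HNPC l1 (Hi1 l1 H1)) Hp1); [lra|auto].
Qed.

End SideCoordinates.

Definition rich (A : list (point -> Prop)) (O : point -> Prop) : Prop :=
  exists S, incl S A /\ NoDup S /\ (length A <= 3 * (length S * length S))%nat /\
    forall p, V S p -> O p.

Definition covered_by_two (c1 c2 : side) (L : point -> Prop) : Prop :=
  forall p, L p -> open_side c1 p \/ open_side c2 p.

Lemma rich_of_two_cover A c1 c2 : (forall L, In L A -> is_line L) -> NoDup A ->
  (length A <= 3 * length (pfilter (covered_by_two c1 c2) A))%nat ->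
  rich A (open_side c1) \/ rich A (open_side c2).
Proof.
  intros HL HA Hlen. set (C := pfilter (covered_by_two c1 c2) A) in *.
  assert (HCA : incl C A) by apply pfilter_incl.
  assert (HC : forall L, In L C -> covered_by_two c1 c2 L) by (intros L H; apply pfilter_In in H; tauto).
  destruct c1 as [n y]. destruct (Rle_lt_or_eq_dec 0 (dot n n)) as [Hn|Hn].
  { unfold dot. nra. }
  - destruct (side_split n y Hn (open_side c2) C (fun L H => HL L (HCA L H))
                (pfilter_NoDup _ _ HA) (fun L p H => HC L H p)) as [S [HSC [HS [HSl HV]]]].
    assert (HSA : incl S A) by (eapply incl_tran; eauto).
    assert (HSlen : (length A <= 3 * (length S * length S))%nat) by lia.
    destruct HV; [left|right]; exists S; auto.
  - (* with [n = 0] the first open side is empty *)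
    right. exists C. repeat split; [auto|apply pfilter_NoDup, HA|destruct (length C); nia|].
    intros p [l1 [_ [H1 [_ [_ [Hp1 _]]]]]]. destruct (HC l1 H1 p Hp1) as [Hp|]; [|auto].
    exfalso. destruct n as [n1 n2]. unfold open_side, hform, dot in *; simpl in *.
    replace n1 with 0 in Hp by nra. replace n2 with 0 in Hp by nra. lra.
Qed.

Lemma rich_of_three_cover A c1 c2 c3 : (forall L, In L A -> is_line L) -> NoDup A ->
  (forall p, open_side c1 p \/ open_side c2 p \/ open_side c3 p) ->
  rich A (open_side c1) \/ rich A (open_side c2) \/ rich A (open_side c3).
Proof.
  intros HL HA Hcov.
  assert (Hincl : incl A (pfilter (covered_by_two c1 c2) A ++ pfilter (covered_by_two c1 c3) A ++
                           pfilter (covered_by_two c2 c3) A)).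
  { intros L H. rewrite !in_app_iff, !pfilter_In.
    destruct (line_covered_by_two L c1 c2 c3 (HL L H) (fun p _ => Hcov p)); tauto. }
  pose proof (NoDup_incl_length HA Hincl) as Hlen. rewrite !length_app in Hlen.
  destruct (Compare_dec.le_lt_dec (length A) (3 * length (pfilter (covered_by_two c1 c2) A))).
  { destruct (rich_of_two_cover A c1 c2); tauto. }
  destruct (Compare_dec.le_lt_dec (length A) (3 * length (pfilter (covered_by_two c1 c3) A))).
  { destruct (rich_of_two_cover A c1 c3); tauto. }
  destruct (rich_of_two_cover A c2 c3); [auto|auto|lia|tauto|tauto].
Qed.

Definition normals (W : list (R * R)) : list (R * R) :=
  [(1, 0); (-1, 0); (0, 1); (0, -1)] ++ flat_map (fun w => [perp w; vneg (perp w)]) W.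

Lemma normals_incl W W' : incl W W' -> incl (normals W) (normals W').
Proof.
  intros HW n Hn. unfold normals in *. rewrite in_app_iff, in_flat_map in *.
  destruct Hn as [Hn|[w [Hw Hn]]]; [left; auto|right; exists w; auto].
Qed.

Lemma dot_perp_decomp (m w x : R * R) :
  dot w w * dot m x = dot m (perp w) * dot (perp w) x + dot m w * dot w x.
Proof. unfold dot, perp; simpl. ring. Qed.

Lemma farkas_normals W r a : (forall w, In w W -> 0 <= dot a w) -> dot a r < 0 ->
  exists n, In n (normals W) /\ (forall w, In w W -> 0 <= dot n w) /\ dot n r < 0.
Proof.
  revert r a. induction W as [|w W IH]; intros r a HW Hr.
  - destruct r as [r1 r2]. unfold normals, dot in *; simpl in *.
    assert (Hr0 : r1 <> 0 \/ r2 <> 0) by (apply NNPP; intros H; apply H; left; intros ->; nra).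
    destruct (Rlt_or_le 0 r1); [exists (-1, 0)|].
    { split; [tauto|split; [intros _ []|simpl; lra]]. }
    destruct (Rlt_or_le r1 0); [exists (1, 0)|].
    { split; [tauto|split; [intros _ []|simpl; lra]]. }
    destruct (Rlt_or_le 0 r2); [exists (0, -1)|exists (0, 1)];
      (split; [tauto|split; [intros _ []|simpl]]); destruct Hr0; lra.
  - destruct (IH r a) as [n' [Hn' [HW' Hr']]]; [intros; apply HW; simpl; auto|auto|].
    assert (HnC : incl (normals W) (normals (w :: W))) by (apply normals_incl; intros x Hx; simpl; auto).
    destruct (Rle_or_lt 0 (dot n' w)) as [Hw|Hw].
    { exists n'. split; [auto|split; [intros x [<-|Hx]; auto|auto]]. }
    assert (Haw : 0 <= dot a w) by (apply HW; simpl; auto).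
    (* combine [n'] and [a] into [m] orthogonal to [w]; then [m] is a multiple of [perp w] *)
    set (m := (dot a w * fst n' - dot n' w * fst a, dot a w * snd n' - dot n' w * snd a)).
    assert (Hm : forall x, dot m x = dot a w * dot n' x - dot n' w * dot a x)
      by (intros x; unfold m, dot; simpl; ring).
    assert (Hmw : dot m w = 0) by (rewrite Hm; ring).
    assert (Hmr : dot m r < 0) by (rewrite Hm; nra).
    assert (HmW : forall x, In x W -> 0 <= dot m x).
    { intros x Hx. rewrite Hm. pose proof (HW' x Hx). assert (0 <= dot a x) by (apply HW; simpl; auto). nra. }
    assert (Hww : 0 < dot w w) by (apply dot_self_pos; intros ->; unfold dot in Hw; simpl in Hw; lra).
    assert (Hpar : forall x, dot w w * dot m x = dot m (perp w) * dot (perp w) x)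
      by (intros x; rewrite dot_perp_decomp, Hmw; ring).
    assert (Hneg : forall x, dot (vneg (perp w)) x = - dot (perp w) x) by (intros; unfold dot, vneg; simpl; ring).
    assert (Hperp : dot (perp w) w = 0) by (unfold dot, perp; simpl; ring).
    assert (Hin : In (perp w) (normals (w :: W)) /\ In (vneg (perp w)) (normals (w :: W)))
      by (unfold normals; rewrite !in_app_iff; simpl; tauto).
    pose proof (Hpar r).
    destruct (Rtotal_order (dot m (perp w)) 0) as [Hs|[Hs|Hs]];
      [exists (vneg (perp w))|nra|exists (perp w)];
      (split; [tauto|split; [intros x [<-|Hx]|]]); try rewrite Hneg;
      try (pose proof (Hpar x); pose proof (HmW x Hx)); nra.
Qed.

Lemma argmin_list (f : point -> R) (Y : list point) : Y <> [] ->
  exists y0, In y0 Y /\ forall y, In y Y -> f y0 <= f y.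
Proof.
  induction Y as [|a Y IH]; intros H; [congruence|].
  destruct Y as [|b Y'].
  - exists a. split; [simpl; auto|]. intros y [<-|[]]; lra.
  - destruct IH as [y0 [H0 H1]]; [discriminate|].
    destruct (Rle_or_lt (f a) (f y0)).
    + exists a. split; [simpl; auto|]. intros y [<-|Hy]; [lra|]. specialize (H1 y Hy). lra.
    + exists y0. split; [simpl; auto|]. intros y [<-|Hy]; [lra|auto].
Qed.

Definition diffs (Vl : list point) : list (R * R) := flat_map (fun v => map (fun w => vsub w v) Vl) Vl.

Definition candidates (Vl : list point) : list side := list_prod (normals (diffs Vl)) Vl.

Lemma separating_candidate (Vl Y : list point) a b c q : incl Y Vl -> Y <> [] ->
  (forall y, In y Y -> c < a * fst y + b * snd y) -> a * fst q + b * snd q <= c ->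
  exists cand, In cand (candidates Vl) /\ open_side cand q /\ forall y, In y Y -> closed_side cand y.
Proof.
  intros HYV HY HYout Hq.
  destruct (argmin_list (fun y => a * fst y + b * snd y) Y HY) as [y0 [Hy0 Hmin]].
  destruct (farkas_normals (map (fun y => vsub y y0) Y) (vsub q y0) (a, b)) as [n [Hn [HnW Hnr]]].
  - intros w Hw. apply in_map_iff in Hw. destruct Hw as [y [<- Hy]].
    specialize (Hmin y Hy). unfold dot, vsub; simpl. lra.
  - specialize (HYout y0 Hy0). unfold dot, vsub; simpl. lra.
  - exists (n, y0). split; [|split].
    + apply in_prod; [|auto]. apply (normals_incl (map (fun y => vsub y y0) Y)); [|auto].
      intros w Hw. apply in_map_iff in Hw. destruct Hw as [y [<- Hy]].
      apply in_flat_map. exists y0. split; [auto|]. apply (in_map (fun w => vsub w y0)), HYV, Hy.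
    + exact Hnr.
    + intros y Hy. apply HnW, (in_map (fun y => vsub y y0)), Hy.
Qed.

Lemma V_incl S A p : incl S A -> V S p -> V A p.
Proof. intros HI [l1 [l2 [H1 [H2 H]]]]. exists l1, l2. auto. Qed.

Lemma rich_mono A (O O' : point -> Prop) : rich A O -> (forall p, V A p -> O p -> O' p) -> rich A O'.
Proof.
  intros [S [HSA [HS [Hlen HV]]]] HOO'. exists S. repeat split; auto.
  intros p Hp. apply HOO'; [apply (V_incl S)|]; auto.
Qed.

Lemma rich_closed_halfplanes A Vl q : NoDup A -> (forall p, V A p -> In p Vl) ->
  (forall cand, In cand (candidates Vl) -> ~ rich A (open_side cand) -> closed_side cand q) ->
  forall a b c, a * fst q + b * snd q <= c -> rich A (fun p => a * fst p + b * snd p <= c).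
Proof.
  intros HA HVl Hq a b c Hqh. apply NNPP. intros Hnot.
  set (Y := pfilter (fun y => ~ a * fst y + b * snd y <= c) Vl).
  destruct (classic (Y = [])) as [HY|HY].
  - apply Hnot. exists A. repeat split; [apply incl_refl|auto|destruct (length A); nia|].
    intros p Hp. apply NNPP. intros Hph.
    assert (HpY : In p Y) by (apply pfilter_In; auto). rewrite HY in HpY. destruct HpY.
  - destruct (separating_candidate Vl Y a b c q) as [cand [Hcand [Hopen Hclosed]]]; auto.
    + apply pfilter_incl.
    + intros y Hy. apply pfilter_In in Hy. lra.
    + assert (Hrich : ~ rich A (open_side cand)).
      { intros Hr. apply Hnot, (rich_mono A (open_side cand)); [auto|].
        intros p Hp Hpo. apply NNPP. intros Hph.
        assert (Hcl : closed_side cand p) by (apply Hclosed, pfilter_In; auto).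
        unfold open_side, closed_side in *. lra. }
      specialize (Hq cand Hcand Hrich). unfold open_side, closed_side in *. lra.
Qed.

Lemma sqrt_bound_of_square (n m : nat) : (n <= 3 * (m * m))%nat -> sqrt (INR n / 3) <= INR m.
Proof.
  intros H. apply le_INR in H. rewrite !mult_INR in H. simpl in H.
  rewrite <- (sqrt_square (INR m)) by apply pos_INR. apply sqrt_le_1_alt. unfold Rdiv. lra.
Qed.

Theorem mainTheorem5 :
  forall A : list (point -> Prop),
    Forall is_line A -> NoDup A ->
    exists q : point,
      forall h : point -> Prop, is_closed_halfplane h -> h q ->
        exists A' : list (point -> Prop),
          incl A' A /\ NoDup A' /\
          sqrt (INR (length A) / 3) <= INR (length A') /\
          (forall p : point, V A' p -> h p).
Proof.
  intros A HF HA. rewrite Forall_forall in HF.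
  destruct (V_finite A HF) as [Vl HVl].
  set (F := pfilter (fun cand => ~ rich A (open_side cand)) (candidates Vl)).
  destruct (helly F) as [q Hq].
  - (* three closed sides missing each other would give three covering open sides *)
    intros c1 c2 c3 H1 H2 H3. apply pfilter_In in H1, H2, H3. apply NNPP. intros Hno.
    destruct (rich_of_three_cover A c1 c2 c3 HF HA) as [|[|]]; try tauto.
    intros p. apply NNPP. intros Hp. apply Hno. exists p.
    unfold open_side, closed_side in *. repeat split; lra.
  - exists q. intros h [a [b [c [_ Hh]]]] Hhq.
    assert (HqF : forall cand, In cand (candidates Vl) -> ~ rich A (open_side cand) -> closed_side cand q)
      by (intros cand H1 H2; apply Hq, pfilter_In; auto).
    destruct (rich_closed_halfplanes A Vl q HA HVl HqF a b c (proj1 (Hh q) Hhq))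
      as [S [HSA [HS [Hlen HV]]]].
    exists S. repeat split; auto.
    + apply sqrt_bound_of_square, Hlen.
    + intros p Hp. apply Hh, HV, Hp.
Qed.
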